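(* Let $p$ be a prime, $n\ge2$, and $\Gamma$ a profinite group acting trivially on $\mathbb{F}_p$. If every open subgroup of $\Gamma$ satisfies the $n$-fold vanishing Massey product property, then every closed subgroup of $\Gamma$ satisfies the $n$-fold vanishing Massey product property.
   Context: With $U_{n+1}(\mathbb{F}_p)$ the upper unitriangular $(n+1)\times(n+1)$ matrices over $\mathbb{F}_p$ and $\overline{U_{n+1}(\mathbb{F}_p)}$ its quotient by the central subgroup given by the $(1,n+1)$ entry, a profinite group $H$ satisfies the $n$-fold vanishing Massey product property if for every continuous homomorphism $\varphi:H\to\overline{U_{n+1}(\mathbb{F}_p)}$ there is a continuous homomorphism $\psi:H\to U_{n+1}(\mathbb{F}_p)$ whose $(i,i+1)$ entries agree with those of $\varphi$ at every $h\in H$, for $1\le i\le n$. *)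

From HB Require Import structures.
From mathcomp Require Import all_boot all_order all_algebra.
From mathcomp Require Import all_classical topology.
Set Implicit Arguments.
Unset Strict Implicit.
Unset Printing Implicit Defensive.
Import GRing.Theory.
Local Open Scope classical_set_scope.
Local Open Scope ring_scope.

Record profinite_group := ProfiniteGroup {
  pg_car :> topologicalType;
  pg_mul : pg_car -> pg_car -> pg_car;
  pg_inv : pg_car -> pg_car;
  pg_one : pg_car;
  pg_mulA : associative pg_mul;
  pg_mul1g : left_id pg_one pg_mul;
  pg_mulVg : forall x, pg_mul (pg_inv x) x = pg_one;
  pg_mul_cont : continuous (fun xy : pg_car * pg_car => pg_mul xy.1 xy.2);
  pg_inv_cont : continuous pg_inv;
  pg_hausdorff : hausdorff_space pg_car;
  pg_compact : compact [set: pg_car];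
  pg_tdisc : totally_disconnected [set: pg_car]
}.

Definition is_subgroup (G : profinite_group) (H : set G) : Prop :=
  H (pg_one G) /\
  (forall x y, H x -> H y -> H (pg_mul x (pg_inv y))).

Definition unitri (p n : nat) (M : 'M['F_p]_(n.+1)) : Prop :=
  forall i j : 'I_n.+1, (j <= i)%N -> M i j = (if i == j then 1 else 0).

(* Elements of the quotient of U_{n+1}(F_p) by the central subgroup of
   the (1,n+1) entry are represented by unitriangular matrices, two
   representatives being equal iff they agree off the corner (1,n+1)
   (0-indexed: (0,n)).  [trunc M] is the canonical representative
   (corner set to 0), i.e. the image of M in the quotient. *)
Definition trunc (p n : nat) (M : 'M['F_p]_(n.+1)) : 'M['F_p]_(n.+1) :=
  \matrix_(i, j) (if ((i : nat) == 0%N) && ((j : nat) == n) then 0 else M i j).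

(* f : H -> X is continuous for the subspace topology on H and the
   discrete topology on X, i.e. locally constant on H. *)
Definition loc_const_on (G : profinite_group) (H : set G) (X : Type)
    (f : G -> X) : Prop :=
  forall x, H x -> exists O : set G, [/\ open O, O x &
     forall y, H y -> O y -> f y = f x].

Definition cont_hom_U (p n : nat) (G : profinite_group) (H : set G)
    (psi : G -> 'M['F_p]_(n.+1)) : Prop :=
  [/\ forall x, H x -> unitri (psi x),
      forall x y, H x -> H y -> psi (pg_mul x y) = psi x *m psi y &
      loc_const_on H psi].

(* continuous homomorphism H -> U_{n+1}(F_p)/Z, given through a choice of
   representatives phi x of the cosets *)
Definition cont_hom_Ubar (p n : nat) (G : profinite_group) (H : set G)
    (phi : G -> 'M['F_p]_(n.+1)) : Prop :=
  [/\ forall x, H x -> unitri (phi x),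
      forall x y, H x -> H y ->
        trunc (phi (pg_mul x y)) = trunc (phi x *m phi y) &
      loc_const_on H (fun x => trunc (phi x))].

Definition massey_vanishing (p n : nat) (G : profinite_group) (H : set G)
    : Prop :=
  forall phi : G -> 'M['F_p]_(n.+1), cont_hom_Ubar H phi ->
  exists psi : G -> 'M['F_p]_(n.+1), cont_hom_U H psi /\
    (forall x, H x -> forall i : 'I_n,
       psi x (inord i) (inord i.+1) = phi x (inord i) (inord i.+1)).

From mathcomp Require Import all_boot all_order all_algebra.
From mathcomp Require Import all_classical topology.

(* Let phi be a continuous homomorphism from the closed subgroup H to the
   quotient of U_{n+1}(F_p). Its kernel contains the intersection of H with
   some open neighbourhood O of 1. A profinite group is compact Hausdorff and
   totally disconnected, hence zero-dimensional, so O contains an open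
   subgroup V; as H is compact, the elements all of whose H-conjugates lie in
   V form an open subgroup W normalised by H. Then U = HW is an open subgroup
   containing H, and phi extends to U by hw |-> phi(h), which is well defined
   because phi kills the intersection of H and W. A lift of the extension to
   U_{n+1}(F_p), provided by the hypothesis on open subgroups, restricts to a
   lift of phi on H. *)

Local Open Scope classical_set_scope.

Lemma open_compact_forall {X Y Z : topologicalType} {A : set X} {O : set Z}
    {f : X * Y -> Z} :
  compact A -> open O -> continuous f ->
  open [set y | forall a, A a -> O (f (a, y))].
Proof.
move=> /compact_near_coveringP cA oO cf; rewrite openE => y Oy.
apply: (cA Y (nbhs y) (fun y a => O (f (a, y)))) => a Aa.
have /(_ (conj oO (Oy a Aa)))[[P Q] /= [Pa Qy] PQ] :=
  cf (a, y) O \o @open_nbhs_nbhs _ _ _.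
by exists (P, Q) => // -[b z] /PQ.
Qed.

Section QuasiComponent.
Context {T : topologicalType}.

Definition quasi_component (x : T) :=
  \bigcap_(C in [set C : set T | clopen C /\ C x]) C.

Lemma quasi_component_refl (x : T) : quasi_component x x.
Proof. by move=> C []. Qed.

Lemma closed_quasi_component (x : T) : closed (quasi_component x).
Proof. by apply: closed_bigI => C [[]]. Qed.

Lemma quasi_component_clopen_avoid {x : T} {K : set T} : compact K ->
  (forall z, quasi_component x z -> ~ K z) ->
  exists C, [/\ clopen C, C x & forall z, C z -> ~ K z].
Proof.
move=> cK QK; apply: contrapT => noC.
pose F := filter_from [set C : set T | clopen C /\ C x] (fun C => C `&` K).
have FF : Filter F.
  apply: filter_from_filter; first by exists setT; split=> //; exact: clopenT.
  move=> C1 C2 [cl1 x1] [cl2 x2]; exists (C1 `&` C2) => [|z [[? ?] ?] //].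
  by split; [exact: clopenI|].
have PF : ProperFilter F.
  apply: filter_from_proper => C [clC Cx]; apply: contrapT => nCK.
  by apply: noC; exists C; split=> // z Cz Kz; apply: nCK; exists z.
have FK : F K by exists setT; [split=> //; exact: clopenT | move=> z []].
have [z [Kz clz]] := cK F PF FK.
apply: (QK z) => // C [[oC cC] Cx]; apply: contrapT => nCz.
have FC : F C by exists C => // w [].
have nCnbhs : nbhs z (~` C).
  by apply: open_nbhs_nbhs; split=> //; exact: closed_openC.
by have [w []] := clz C (~` C) FC nCnbhs.
Qed.

Hypotheses (hT : hausdorff_space T) (cT : compact [set: T]).

Lemma compact_hausdorff_separate {A B : set T} :
  closed A -> closed B -> A `&` B = set0 ->
  exists U V, [/\ open U, open V, A `<=` U, B `<=` V & U `&` V = set0].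
Proof.
move=> cA cB AB0.
have nAB : set_nbhs A (~` B).
  apply/set_nbhsP; exists (~` B); split=> //; first exact: closed_openC.
  by move=> z Az Bz; rewrite -[False]/(set0 z) -AB0.
have [S /set_nbhsP[U [oU AU US]] clS] := compact_normal hT cT cA nAB.
exists U, (~` closure S); split=> //; first exact/closed_openC/closed_closure.
- by move=> z Bz /clS.
- by rewrite -subset0 => z [/US Sz]; apply; exact: subset_closure.
Qed.

Lemma quasi_component_sub {x : T} {A B : set T} :
  closed A -> closed B -> A `&` B = set0 ->
  quasi_component x `<=` A `|` B -> A x -> quasi_component x `<=` A.
Proof.
move=> cA cB AB0 QAB Ax.
have [U [V [oU oV AU BV UV0]]] := compact_hausdorff_separate cA cB AB0.
have UVP z : U z -> V z -> False by move=> Uz Vz; rewrite -[False]/(set0 z) -UV0.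
have cK : compact (~` (U `|` V)).
  by apply: (subclosed_compact _ cT) => //; apply/open_closedC/openU.
have QUV z : quasi_component x z -> ~ (~` (U `|` V)) z.
  by move=> /QAB [/AU|/BV] UVz; apply; [left|right].
have [C [[oC cC] Cx CK]] := quasi_component_clopen_avoid cK QUV.
have CUE : C `&` U = C `&` ~` V.
  apply/seteqP; split=> z [Cz UVz]; split=> //.
  - by move/(UVP z).
  - by apply: contrapT => nUz; apply: (CK z Cz); case.
have clCU : clopen (C `&` U).
  by split; [exact: openI | rewrite CUE; apply: closedI => //; exact: open_closedC].
move=> z Qz; have [_ Uz] := Qz _ (conj clCU (conj Cx (AU x Ax))).
by case: (QAB z Qz) => // /BV /(UVP z Uz).
Qed.

Lemma quasi_component_connected (x : T) : connected (quasi_component x).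
Proof.
set Q := quasi_component x.
move=> B [b Bb] [O oO BO] [D cD BD].
have cB : closed B by rewrite BD; exact: closedI (closed_quasi_component x) cD.
have cQO : closed (Q `&` ~` O).
  by apply: closedI; [exact: closed_quasi_component | exact: open_closedC].
have BQO : B `&` (Q `&` ~` O) = set0.
  by rewrite -subset0 BO => z [[_ Oz] [_ nOz]].
have QBQO : Q `<=` B `|` (Q `&` ~` O).
  by move=> z Qz; have [Oz|nOz] := pselect (O z); [left; rewrite BO | right].
have [Bx|nBx] := pselect (B x).
  apply/seteqP; split; first by rewrite BO => z [].
  exact: quasi_component_sub cB cQO BQO QBQO Bx.
have QOx : (Q `&` ~` O) x.
  split=> [|Ox]; first exact: quasi_component_refl.
  by apply: nBx; rewrite BO; split=> //; exact: quasi_component_refl.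
have QQO : Q `<=` Q `&` ~` O.
  apply: quasi_component_sub cQO cB _ _ QOx; first by rewrite setIC.
  by rewrite setUC.
by move: Bb; rewrite BO => -[Qb Ob]; case: (QQO b Qb).
Qed.

Lemma compact_totally_disconnected_zero_dimension :
  totally_disconnected [set: T] -> zero_dimensional T.
Proof.
move=> td x y xy; apply: contrapT => nsep.
have Qy : quasi_component x y.
  by move=> C [clC Cx]; apply: contrapT => nCy; apply: nsep; exists C.
have := connected_component_max (quasi_component_refl x) (fun _ _ => I)
  (quasi_component_connected x) Qy.
by rewrite td // => yx; move: xy; rewrite -yx eqxx.
Qed.

End QuasiComponent.

Section GroupLaws.
Context {G : profinite_group}.
Local Notation "x ** y" := (pg_mul x y) (at level 40, left associativity).
Local Notation "x ^-1" := (pg_inv x).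
Local Notation one := (pg_one G).
Implicit Types x y : G.

Lemma pg_mulgV x : x ** x^-1 = one.
Proof.
rewrite -[x ** _]pg_mul1g -{1}(pg_mulVg (x^-1)).
by rewrite -pg_mulA (pg_mulA (x^-1) x) pg_mulVg pg_mul1g pg_mulVg.
Qed.

Lemma pg_mulg1 x : x ** one = x.
Proof. by rewrite -(pg_mulVg x) pg_mulA pg_mulgV pg_mul1g. Qed.

Lemma pg_mulKVg x y : x ** (x^-1 ** y) = y.
Proof. by rewrite pg_mulA pg_mulgV pg_mul1g. Qed.

Lemma pg_mulgK x y : x ** y ** y^-1 = x.
Proof. by rewrite -pg_mulA pg_mulgV pg_mulg1. Qed.

Lemma pg_invgK x : (x^-1)^-1 = x.
Proof. by rewrite -[LHS]pg_mulg1 -(pg_mulVg x) pg_mulA pg_mulVg pg_mul1g. Qed.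

Lemma pg_invMg x y : (x ** y)^-1 = y^-1 ** x^-1.
Proof.
have xyV : x ** y ** (y^-1 ** x^-1) = one.
  by rewrite pg_mulA pg_mulgK pg_mulgV.
by rewrite -[LHS]pg_mulg1 -xyV pg_mulA pg_mulVg pg_mul1g.
Qed.

Lemma pg_invg1 : one^-1 = one.
Proof. by rewrite -[LHS]pg_mul1g pg_mulgV. Qed.

Lemma is_subgroup1 {H : set G} : is_subgroup H -> H one.
Proof. by case. Qed.

Lemma is_subgroupV {H : set G} {x} : is_subgroup H -> H x -> H x^-1.
Proof. by move=> [H1 HM] Hx; have := HM _ _ H1 Hx; rewrite pg_mul1g. Qed.

Lemma is_subgroupM {H : set G} {x y} : is_subgroup H -> H x -> H y -> H (x ** y).
Proof.
by move=> sH Hx Hy; have := proj2 sH _ _ Hx (is_subgroupV sH Hy); rewrite pg_invgK.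
Qed.

Lemma pg_lmul_continuous x : continuous (fun y => x ** y).
Proof.
move=> y; apply: (@continuous2_cvg _ _ _ _ _ _ (fun=> x) id (@pg_mul G)).
- exact: (@pg_mul_cont G (x, y)).
- exact: cvg_cst.
- exact: cvg_id.
Qed.

Lemma pg_conj_continuous : continuous (fun hg : G * G => hg.1^-1 ** hg.2 ** hg.1).
Proof.
move=> [h g].
apply: (@continuous2_cvg _ _ _ _ _ _ (fun hg : G * G => hg.1^-1 ** hg.2) fst
  (@pg_mul G)).
- exact: (@pg_mul_cont G (_, _)).
- apply: (@continuous2_cvg _ _ _ _ _ _ (fun hg : G * G => hg.1^-1) snd (@pg_mul G)).
  + exact: (@pg_mul_cont G (_, _)).
  + apply: (@cvg_comp _ _ _ fst); [exact: cvg_fst | exact: pg_inv_cont].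
  + exact: cvg_snd.
- exact: cvg_fst.
Qed.

End GroupLaws.

Section OpenSubgroups.
Context {G : profinite_group}.
Local Notation "x ** y" := (pg_mul x y) (at level 40, left associativity).
Local Notation "x ^-1" := (pg_inv x).
Local Notation one := (pg_one G).

Lemma open_subgroup_nbhs1 {O : set G} : nbhs one O ->
  exists V : set G, [/\ is_subgroup V, open V & V `<=` O].
Proof.
move=> O1.
have zdG := compact_totally_disconnected_zero_dimension
  (@pg_hausdorff G) (@pg_compact G) (@pg_tdisc G).
have [C [C1 [oC cC]] CO] :=
  zero_dimensional_cvg (@pg_hausdorff G) zdG (@pg_compact G) O1.
have cCc : compact C := subclosed_compact cC (@pg_compact G) (fun _ _ => I).
pose V1 := [set g : G | forall c, C c -> C (c ** g)].
have oV1 : open V1 := open_compact_forall cCc oC (@pg_mul_cont G).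
exists (V1 `&` (@pg_inv G @^-1` V1)); split.
- split.
  + by split=> c Cc /=; rewrite ?pg_invg1 pg_mulg1.
  + move=> x y [Vx1 Vx2] [Vy1 Vy2]; split=> c Cc /=.
    * by rewrite pg_mulA; apply: Vy2; apply: Vx1.
    * by rewrite pg_invMg pg_invgK pg_mulA; apply: Vx2; apply: Vy1.
- by apply: openI => //; exact: (proj1 (continuousP _) (@pg_inv_cont G)).
- by move=> g [/(_ one C1)]; rewrite pg_mul1g => /CO.
Qed.

Definition normalizes (H W : set G) : Prop :=
  forall h w, H h -> W w -> W (h ** w ** h^-1).

Lemma open_normal_core {H V : set G} : is_subgroup H -> closed H ->
  is_subgroup V -> open V ->
  exists W : set G, [/\ is_subgroup W, open W, W `<=` V & normalizes H W].
Proof.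
move=> sH cH sV oV.
have cHc : compact H := subclosed_compact cH (@pg_compact G) (fun _ _ => I).
pose W := [set g : G | forall h, H h -> V (h^-1 ** g ** h)].
have oW : open W := open_compact_forall cHc oV pg_conj_continuous.
exists W; split=> //.
- split=> [h Hh|x y Wx Wy h Hh].
    by rewrite pg_mulg1 pg_mulVg; exact: is_subgroup1 sV.
  have -> : h^-1 ** (x ** y^-1) ** h = (h^-1 ** x ** h) ** (h^-1 ** y ** h)^-1.
    by rewrite !pg_invMg pg_invgK !pg_mulA pg_mulgK.
  exact: (proj2 sV _ _ (Wx h Hh) (Wy h Hh)).
- by move=> g /(_ one (is_subgroup1 sH)); rewrite pg_invg1 pg_mul1g pg_mulg1.
- move=> h g Hh Wg k Hk.
  have := Wg (h^-1 ** k) (is_subgroupM sH (is_subgroupV sH Hh) Hk).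
  by rewrite pg_invMg pg_invgK !pg_mulA.
Qed.

Definition prodset (H W : set G) : set G :=
  [set g | exists2 h, H h & W (h^-1 ** g)].

Lemma sub_prodset {H W : set G} : is_subgroup W -> H `<=` prodset H W.
Proof.
by move=> sW h Hh; exists h => //; rewrite pg_mulVg; exact: is_subgroup1 sW.
Qed.

Lemma prodset_subgroup {H W : set G} : is_subgroup H -> is_subgroup W ->
  normalizes H W -> is_subgroup (prodset H W).
Proof.
move=> sH sW nWH; split; first exact/(sub_prodset sW)/(is_subgroup1 sH).
move=> x y [h1 Hh1 Wx] [h2 Hh2 Wy]; exists (h1 ** h2^-1); first exact: (proj2 sH).
have -> : (h1 ** h2^-1)^-1 ** (x ** y^-1) =
    h2 ** ((h1^-1 ** x) ** (h2^-1 ** y)^-1) ** h2^-1.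
  by rewrite !pg_invMg !pg_invgK !pg_mulA pg_mulgK.
exact/nWH/(proj2 sW).
Qed.

Lemma prodset_open {H W : set G} : open W -> open (prodset H W).
Proof.
move=> oW; rewrite openE => g [h Hh Wg].
have : nbhs g ((fun y => h^-1 ** y) @^-1` W).
  apply: open_nbhs_nbhs; split=> //.
  exact: (proj1 (continuousP _) (pg_lmul_continuous _)).
by apply: filterS => y Wy; exists h.
Qed.

Definition prodset_proj (H W : set G) (g : G) : G :=
  if pselect (H g) then g else xget one [set h | H h /\ W (h^-1 ** g)].

Lemma prodset_proj_id {H W : set G} {h : G} : H h -> prodset_proj H W h = h.
Proof. by rewrite /prodset_proj; case: pselect. Qed.

Lemma prodset_projP {H W : set G} {g : G} : is_subgroup W -> prodset H W g ->
  H (prodset_proj H W g) /\ W ((prodset_proj H W g)^-1 ** g).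
Proof.
move=> sW [h Hh Wg]; rewrite /prodset_proj; case: pselect => [Hg|nHg] /=.
  by rewrite pg_mulVg; split=> //; exact: is_subgroup1 sW.
by apply: (@xgetPex _ one [set k | H k /\ W (k^-1 ** g)]); exists h.
Qed.

End OpenSubgroups.

(* Only the corner (0, n) of A *m B depends on the corners of A and B. *)
Lemma trunc_mul_unitri (p n : nat) (A B : 'M['F_p]_n.+1) :
  unitri A -> unitri B -> trunc (A *m B) = trunc (trunc A *m trunc B).
Proof.
move=> uA uB; apply/matrixP => i j; rewrite !mxE.
case: ifP => // not_corner; apply: eq_bigr => k _; rewrite !mxE.
case: ifP => [/andP[/eqP i0 /eqP kn] | _].
  have jk : (j <= k)%N by rewrite kn -ltnS ltn_ord.
  rewrite (uB k j jk); case: eqP => [kj|_]; last by rewrite GRing.mulr0 GRing.mul0r.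
  by move: not_corner; rewrite i0 -kj kn !eqxx.
case: ifP => [/andP[/eqP k0 /eqP jn] | //].
have ki : (k <= i)%N by rewrite k0.
rewrite (uA i k ki); case: eqP => [ik|_]; last by rewrite GRing.mul0r GRing.mulr0.
by move: not_corner; rewrite ik k0 jn !eqxx.
Qed.

Section UbarHomomorphisms.
Context {p n : nat} {G : profinite_group}.
Local Notation "x ** y" := (pg_mul x y) (at level 40, left associativity).
Local Notation "x ^-1" := (pg_inv x).
Local Notation one := (pg_one G).

Lemma cont_hom_Ubar_mulr_ker {H : set G} {phi : G -> 'M['F_p]_n.+1} {h k : G} :
  is_subgroup H -> cont_hom_Ubar H phi -> H h -> H k ->
  trunc (phi k) = trunc (phi one) -> trunc (phi (h ** k)) = trunc (phi h).
Proof.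
move=> sH [phiU phiM _] Hh Hk phik; have H1 := is_subgroup1 sH.
rewrite phiM // trunc_mul_unitri ?phik; try exact: phiU.
by rewrite -trunc_mul_unitri -?phiM ?pg_mulg1 //; exact: phiU.
Qed.

Lemma cont_hom_U_sub {H U : set G} {psi : G -> 'M['F_p]_n.+1} :
  H `<=` U -> cont_hom_U U psi -> cont_hom_U H psi.
Proof.
move=> HU [psiU psiM psiL]; split.
- by move=> x /HU; exact: psiU.
- by move=> x y /HU Ux /HU; exact: psiM.
- move=> x /HU /psiL[O [oO Ox psiO]].
  by exists O; split=> // y /HU; exact: psiO.
Qed.

End UbarHomomorphisms.

Section ProdsetExtension.
Context {p n : nat} {G : profinite_group} {H W : set G} {phi : G -> 'M['F_p]_n.+1}.
Local Notation "x ** y" := (pg_mul x y) (at level 40, left associativity).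
Local Notation "x ^-1" := (pg_inv x).
Local Notation proj := (prodset_proj H W).
Hypotheses (sH : is_subgroup H) (sW : is_subgroup W) (oW : open W)
  (nWH : normalizes H W) (phiH : cont_hom_Ubar H phi)
  (phiW : forall k, H k -> W k -> trunc (phi k) = trunc (phi (pg_one G))).

Lemma trunc_prodset_proj {g h : G} : prodset H W g -> H h -> W (h^-1 ** g) ->
  trunc (phi (proj g)) = trunc (phi h).
Proof.
move=> Ug Hh Wg; have [Hpg Wpg] := prodset_projP sW Ug.
have Hk : H (h^-1 ** proj g) by exact: is_subgroupM sH (is_subgroupV sH Hh) Hpg.
have Wk : W (h^-1 ** proj g).
  have -> : h^-1 ** proj g = (h^-1 ** g) ** ((proj g)^-1 ** g)^-1.
    by rewrite pg_invMg pg_invgK !pg_mulA pg_mulgK.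
  exact: (proj2 sW).
rewrite -(pg_mulKVg h (proj g)) (cont_hom_Ubar_mulr_ker sH phiH Hh Hk) //.
exact: phiW.
Qed.

Lemma cont_hom_Ubar_prodset : cont_hom_Ubar (prodset H W) (fun g => phi (proj g)).
Proof.
have [phiU phiM _] := phiH; split.
- by move=> x /(prodset_projP sW) [Hx _]; exact: phiU.
- move=> x y Ux Uy.
  have [Hx Wx] := prodset_projP sW Ux; have [Hy Wy] := prodset_projP sW Uy.
  rewrite -phiM //; apply: trunc_prodset_proj.
  + exact: is_subgroupM (prodset_subgroup sH sW nWH) Ux Uy.
  + exact: is_subgroupM sH Hx Hy.
  + have -> : (proj x ** proj y)^-1 ** (x ** y) =
        (proj y)^-1 ** ((proj x)^-1 ** x) ** ((proj y)^-1)^-1 ** ((proj y)^-1 ** y).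
      by rewrite pg_invMg pg_invgK !pg_mulA pg_mulgK.
    exact/(is_subgroupM sW _ Wy)/nWH/Wx/(is_subgroupV sH Hy).
- move=> x Ux; have [Hx Wx] := prodset_projP sW Ux.
  exists ((fun y => (proj x)^-1 ** y) @^-1` W); split=> //.
    exact: (proj1 (continuousP _) (pg_lmul_continuous _)).
  by move=> y Uy Wy; exact: trunc_prodset_proj.
Qed.

End ProdsetExtension.

Theorem mainTheorem9 (p n : nat) (G : profinite_group) :
  prime p -> (2 <= n)%N ->
  (forall H : set G, is_subgroup H -> open H -> massey_vanishing p n H) ->
  forall H : set G, is_subgroup H -> closed H -> massey_vanishing p n H.
Proof.
move=> _ _ massey_open H sH cH phi phiH.
have [_ _ /(_ _ (is_subgroup1 sH))[O [oO O1 phiO]]] := phiH.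
have [V [sV oV VO]] := open_subgroup_nbhs1 (open_nbhs_nbhs (conj oO O1)).
have [W [sW oW WV nWH]] := open_normal_core sH cH sV oV.
have phiW k : H k -> W k -> trunc (phi k) = trunc (phi (pg_one G)).
  by move=> Hk /WV /VO; exact: phiO.
have [psi [psiU psi_phi]] := massey_open _ (prodset_subgroup sH sW nWH)
  (prodset_open oW) _ (cont_hom_Ubar_prodset sH sW oW nWH phiH phiW).
exists psi; split; first exact: cont_hom_U_sub (sub_prodset sW) psiU.
by move=> x Hx i; rewrite psi_phi ?prodset_proj_id //; exact: sub_prodset.
Qed.
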